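(* Let $E\subset\mathbb R^{n-1}$ be open and $B\colon E\to\mathbb R^{n-1}$ smooth, and suppose the oriented lines $\ell_y=\{(t,\,y+tB(y)):t\in\mathbb R\}\subset\mathbb R\times\mathbb R^{n-1}=\mathbb R^n$, $y\in E$, form a smooth nondegenerate line fibration of an open subset of $\mathbb R^n$. Then for every $y\in E$, the linear map $dB_y\colon\mathbb R^{n-1}\to\mathbb R^{n-1}$ has no real eigenvalues.
   Context: A smooth line fibration of an open set $T\subset\mathbb R^n$ is a family of pairwise disjoint oriented lines with union $T$ given by a smooth unit vector field $V$ on $T$ whose integral curves are these lines; it is nondegenerate if at every point $\nabla V$ vanishes only in the direction of $V$ (i.e. $\nabla_XV=0$ implies $X\in\mathrm{span}(V)$). Here $\mathrm{Hom}(\mathbb R,\mathbb R^{n-1})$ is identified with $\mathbb R^{n-1}$. *)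

From HB Require Import structures.
From mathcomp Require Import all_boot all_order all_algebra.
From mathcomp Require Import all_classical all_reals all_analysis.
Set Implicit Arguments. Unset Strict Implicit. Unset Printing Implicit Defensive.
Import Order.TTheory GRing.Theory Num.Theory.
Import numFieldNormedType.Exports.
Local Open Scope classical_set_scope.
Local Open Scope ring_scope.

(* C^k on a set A (A is open in all uses): f continuous on A and, for k > 0,
   every directional derivative exists on A and is C^(k-1) on A.
   In finite dimensions this is the usual C^k. *)
Fixpoint Ck {R : realType} {U W : normedModType R} (A : set U) (k : nat)
    (f : U -> W) : Prop :=
  match k with
  | 0 => forall x, A x -> {for x, continuous f}
  | k'.+1 => (forall x, A x -> {for x, continuous f}) /\
      forall v : U, (forall x, A x -> derivable f x v) /\
                    Ck A k' (fun x => 'D_v f x)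
  end.

Definition smooth_on {R : realType} {U W : normedModType R} (A : set U)
  (f : U -> W) : Prop := forall k, Ck A k f.

Definition eucl2 {R : realType} {n : nat} (v : 'rV[R]_n) : R :=
  \sum_(i < n) (v ord0 i) ^+ 2.

Definition line_pt {R : realType} {m : nat} (B : 'rV[R]_m -> 'rV[R]_m)
  (y : 'rV[R]_m) (t : R) : 'rV[R]_(1 + m) :=
  row_mx (t%:M : 'rV[R]_1) (y + t *: B y).

Definition line_dir {R : realType} {m : nat} (B : 'rV[R]_m -> 'rV[R]_m)
  (y : 'rV[R]_m) : 'rV[R]_(1 + m) :=
  (Num.sqrt (1 + eucl2 (B y)))^-1 *: row_mx (1%:M : 'rV[R]_1) (B y).

Definition line_union {R : realType} {m : nat} (E : set 'rV[R]_m)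
  (B : 'rV[R]_m -> 'rV[R]_m) : set 'rV[R]_(1 + m) :=
  [set p | exists y t, E y /\ p = line_pt B y t].

(* The lines l_y, y in E, form a smooth nondegenerate line fibration of the
   open set T = their union: they are pairwise disjoint, T is open, and there is
   a smooth unit vector field V on T whose integral curves are the (oriented)
   lines, i.e. V is the unit tangent of l_y at each point of l_y; and
   nabla_X V = 0 implies X in span(V). *)
Definition smooth_nondeg_line_fibration {R : realType} {m : nat}
  (E : set 'rV[R]_m) (B : 'rV[R]_m -> 'rV[R]_m) : Prop :=
  let T := line_union E B in
  open T /\
  (forall y1 y2 t1 t2, E y1 -> E y2 -> y1 <> y2 ->
     line_pt B y1 t1 <> line_pt B y2 t2) /\
  exists V : 'rV[R]_(1 + m) -> 'rV[R]_(1 + m),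
    smooth_on T V /\
    (forall p, T p -> eucl2 (V p) = 1) /\
    (forall y t, E y -> V (line_pt B y t) = line_dir B y) /\
    (forall p X, T p -> 'D_X V p = 0 -> exists c : R, X = c *: V p).

From HB Require Import structures.
From mathcomp Require Import all_boot all_order all_algebra.
From mathcomp Require Import all_classical all_reals all_analysis.
From mathcomp Require Import ring.
Import Order.TTheory GRing.Theory Num.Theory.
Import numFieldNormedType.Exports.
Local Open Scope classical_set_scope.
Local Open Scope ring_scope.

(* Let dB_y v = lam v with v <> 0.  Since V is constant along each line, the
   curve r |-> (t, y + r v + t B(y + r v)), which meets the line through
   y + r v at time t, shows that for every t the derivative at r = 0 of the
   unit direction r |-> line_dir B (y + r v) equals D_(0, (1 + t lam) v) V at
   (t, y + t B y); and this derivative vanishes iff dB_y v = 0.  If lam <> 0,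
   the choice t = -1/lam kills the direction, so lam v = dB_y v = 0.  If
   lam = 0, then D_(0, v) V = 0 and nondegeneracy makes (0, v) parallel to V,
   whose time component is positive; again v = 0.  The chain rule needs B and
   V differentiable, which follows from the continuity of their partial
   derivatives. *)

Section mean_value.
Context {R : realType}.
Implicit Types (phi : R -> R) (a b c eta : R).

Lemma mean_value_le phi a b c eta : a <= b ->
  (forall s, a <= s <= b -> derivable phi s 1) ->
  (forall s, a <= s <= b -> `|'D_1 phi s - c| <= eta) ->
  `|phi b - phi a - (b - a) * c| <= eta * (b - a).
Proof.
move=> ab dphi Dphi.
have [xi /[!in_itv] /= xiab ->] : exists2 xi, xi \in `[a, b]%R &
    phi b - phi a = 'D_1 phi xi * (b - a).
  apply: MVT_segment => // [s /[!in_itv] /= /andP[a_s sb]|].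
    by apply: derivableP; apply: dphi; rewrite !ltW.
  apply: continuous_in_subspaceT => s /[!inE] /= /[!in_itv] /= sab.
  exact/differentiable_continuous/derivable1_diffP/dphi.
rewrite [(b - a) * c]mulrC -mulrBl normrM [`|b - a|]ger0_norm ?subr_ge0 //.
by apply: ler_wpM2r; [rewrite subr_ge0 | exact: Dphi].
Qed.

Lemma mean_value_le0 phi b c eta :
  (forall s, `|s| <= `|b| -> derivable phi s 1) ->
  (forall s, `|s| <= `|b| -> `|'D_1 phi s - c| <= eta) ->
  `|phi b - phi 0 - b * c| <= eta * `|b|.
Proof.
have [b_ge0 dphi Dphi|b_lt0 dphi Dphi] := leP 0 b.
  have sb s : 0 <= s <= b -> `|s| <= `|b|.
    by case/andP => s0 sb; rewrite !ger0_norm.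
  have := @mean_value_le phi 0 b c eta b_ge0.
  rewrite !subr0 (ger0_norm b_ge0).
  by apply=> s /sb; [exact: dphi | exact: Dphi].
have sb s : b <= s <= 0 -> `|s| <= `|b|.
  by case/andP => bs s0; rewrite ler0_norm // ltr0_norm // lerN2.
have := @mean_value_le phi b 0 c eta (ltW b_lt0).
rewrite sub0r (ltr0_norm b_lt0) -normrN opprD opprB mulNr opprK.
by apply=> s /sb; [exact: dphi | exact: Dphi].
Qed.

End mean_value.

Section matrix_norm.
Context {K : realDomainType}.

Lemma ler_entry_mx_norm {p q} (A : 'M[K]_(p, q)) i j : `|A i j| <= `|A|.
Proof.
by rewrite [leRHS]/Num.Def.normr /= mx_normrE (le_bigmax _ _ (i, j)).
Qed.

Lemma mx_norm_le {p q} (A : 'M[K]_(p, q)) c :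
  0 <= c -> (forall i j, `|A i j| <= c) -> `|A| <= c.
Proof.
move=> c_ge0 Ac; rewrite [leLHS]/Num.Def.normr /= mx_normrE.
by apply: bigmax_le => // -[i j] _; exact: Ac.
Qed.

Lemma mulmx_norm_le {p q r} (A : 'M[K]_(p, q)) (M : 'M[K]_(q, r)) :
  `|A *m M| <= (\sum_i \sum_j `|M i j|) * `|A|.
Proof.
have M_ge0 : 0 <= \sum_i \sum_j `|M i j| by do 2!apply: sumr_ge0 => ? _.
apply: mx_norm_le => [|k j]; first by rewrite mulr_ge0.
rewrite mxE (le_trans (ler_norm_sum _ _ _)) // mulr_suml.
apply: ler_sum => i _; rewrite normrM mulrC ler_pM //.
  by rewrite (bigD1 j) //= lerDl sumr_ge0.
exact: ler_entry_mx_norm.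
Qed.

End matrix_norm.

Lemma continuous_mulmxr {R : realType} {p q r : nat} (M : 'M[R]_(q, r)) :
  continuous (fun A : 'M[R]_(p, q) => A *m M).
Proof.
move=> A0; apply/(@cvgrPdist_le _ _ _ (nbhs A0)) => e e0.
set c := \sum_i \sum_j `|M i j|.
have c_ge0 : 0 <= c by do 2!apply: sumr_ge0 => ? _.
have c1_gt0 : 0 < c + 1 by rewrite ltr_wpDl.
apply/nbhs_ballP; exists (e / (c + 1)) => [|A]; first by rewrite /= divr_gt0.
rewrite -ball_normE /= => A0A.
rewrite -mulmxBl (le_trans (mulmx_norm_le _ _)) // -/c.
rewrite (le_trans (ler_wpM2l c_ge0 (ltW A0A))) // mulrA ler_pdivrMr //.
by rewrite mulrC ler_pM2l // lerDl.
Qed.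

Section derive_along_line.
Context {R : realType} {U W : normedModType R}.

Lemma is_derive_along_line {f : U -> W} {a u : U} {s : R} :
  derivable f (a + s *: u) u ->
  is_derive s 1 (fun r => f (a + r *: u)) ('D_u f (a + s *: u)).
Proof.
set b := a + s *: u.
have quotE :
    (fun h : R => h^-1 *: ((fun r => f (a + r *: u)) (h *: 1 + s) - f b)) =
    (fun h : R => h^-1 *: (f (h *: u + b) - f b)).
  by apply/funext => h; rewrite scaler1 scalerDl addrCA addrC.
move=> df; apply: DeriveDef; first by rewrite /derivable /= quotE.
by rewrite /derive /= quotE.
Qed.

Lemma is_derive_along_line0 {f : U -> W} {a} (u : U) : differentiable f a ->
  is_derive (0 : R) 1 (fun r => f (a + r *: u)) ('d f a u).
Proof.
move=> df; have := @is_derive_along_line f a u 0.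
by rewrite scale0r addr0 -deriveE //; apply; exact: diff_derivable.
Qed.

End derive_along_line.

Lemma derive_entry {R : realType} {V : normedModType R} {p q : nat}
    {g : V -> 'M[R]_(p, q)} {a v} i j :
  derivable g a v -> is_derive a v (fun b => g b i j) ('D_v g a i j).
Proof.
move=> dg; apply: DeriveDef; first exact: (derivable_mxP _ _ _).1.
by rewrite derive_mx // mxE.
Qed.

Section derive_curves.
Context {R : realType}.

Lemma is_derive1_comp {U W : normedModType R} {f : U -> W} {c : R -> U}
    {s : R} :
  derivable c s 1 -> differentiable f (c s) ->
  is_derive s 1 (f \o c) ('D_('D_1 c s) f (c s)).
Proof.
move=> /derivable1_diffP dc df; have dfc := differentiable_comp dc df.
apply: DeriveDef; first exact: diff_derivable.
by rewrite !deriveE // diff_comp.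
Qed.

Lemma is_derive_mx {V : normedModType R} {p q : nat} (g : V -> 'M[R]_(p, q))
    a v (g' : 'M[R]_(p, q)) :
  (forall i j, is_derive a v (fun b => g b i j) (g' i j)) -> is_derive a v g g'.
Proof.
move=> dg; have dg_mx : derivable g a v.
  by apply/derivable_mxP => i j; case: (dg i j).
apply: DeriveDef => //; rewrite derive_mx //; apply/matrixP => i j.
by rewrite mxE; case: (dg i j).
Qed.

Lemma is_derive_row_mx {p q1 q2 : nat} (a : 'M[R]_(p, q1))
    {g : R -> 'M[R]_(p, q2)} {s : R} {g'} :
  is_derive s 1 g g' -> is_derive s 1 (fun r => row_mx a (g r)) (row_mx 0 g').
Proof.
move=> [dg Dg]; apply: is_derive_mx => i j; rewrite mxE.
have -> : (fun r => row_mx a (g r) i j) =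
    (fun r => match fintype.split j with
              | inl j1 => a i j1 | inr j2 => g r i j2 end).
  by apply/funext => r; rewrite mxE.
case: (fintype.split j) => l; first by rewrite mxE; exact: is_derive_cst.
by rewrite -Dg; exact: derive_entry.
Qed.

Lemma is_derive_scale {p q : nat} {a : R -> R} {g : R -> 'M[R]_(p, q)}
    {s : R} {a' g'} :
  is_derive s 1 a a' -> is_derive s 1 g g' ->
  is_derive s 1 (fun r => a r *: g r) (a' *: g s + a s *: g').
Proof.
move=> da [dg Dg]; apply: is_derive_mx => i j; rewrite !mxE.
have -> : (fun r => (a r *: g r) i j) = a * (fun r => g r i j).
  by apply/funext => r; rewrite mxE.
case: (is_deriveM da (derive_entry i j dg)) => dM DM.
apply: DeriveDef; first exact: dM.
by apply: etrans DM _; rewrite Dg addrC [a' * _]mulrC.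
Qed.

End derive_curves.

Section coord_prefix.
Context {R : realType} {n : nat}.
Implicit Types h : 'rV[R]_n.

Definition coord_prefix h (i : nat) : 'rV[R]_n :=
  \row_l (if (l < i)%N then h 0 l else 0).

Lemma coord_prefix0 h : coord_prefix h 0 = 0.
Proof. by apply/rowP => l; rewrite !mxE. Qed.

Lemma coord_prefix_full h : coord_prefix h n = h.
Proof. by apply/rowP => l; rewrite mxE ltn_ord. Qed.

Lemma coord_prefixS h (i : 'I_n) :
  coord_prefix h i.+1 = coord_prefix h i + h 0 i *: 'e_i.
Proof.
apply/rowP => l; rewrite !mxE eqxx /= ltnS.
have [li|il|/val_inj ->] := ltngtP l i.
- by rewrite -val_eqE (ltn_eqF li) mulr0 addr0.
- by rewrite -val_eqE (gtn_eqF il) mulr0 addr0.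
- by rewrite eqxx mulr1 add0r.
Qed.

Lemma norm_coord_prefix_le h (i : 'I_n) s : `|s| <= `|h 0 i| ->
  `|coord_prefix h i + s *: 'e_i| <= `|h|.
Proof.
move=> si; apply: mx_norm_le => // l0 l; rewrite (ord1 l0) !mxE eqxx /=.
have [li|il|/val_inj ->] := ltngtP l i.
- by rewrite -val_eqE (ltn_eqF li) mulr0 addr0 ler_entry_mx_norm.
- by rewrite -val_eqE (gtn_eqF il) mulr0 addr0 normr0.
- by rewrite eqxx mulr1 add0r (le_trans si) // ler_entry_mx_norm.
Qed.

Lemma telescope_coord_prefix {k} (g : 'rV[R]_n -> 'rV[R]_k)
    (J : 'M[R]_(n, k)) x h j :
  (g (x + h) - g x - h *m J) 0 j =
  \sum_(i < n) (g (x + coord_prefix h i.+1) 0 j - g (x + coord_prefix h i) 0 j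
                - h 0 i * J i j).
Proof.
rewrite sumrB -(big_mkord xpredT (fun i => g (x + coord_prefix h i.+1) 0 j
                                          - g (x + coord_prefix h i) 0 j)).
by rewrite telescope_sumr // coord_prefix_full coord_prefix0 addr0 !mxE.
Qed.

End coord_prefix.

Section continuous_partials.
Context {R : realType} {n k : nat} (f : 'rV[R]_n -> 'rV[R]_k) (x : 'rV[R]_n).
Hypothesis partials_near : \forall y \near x, forall i, derivable f y 'e_i.
Hypothesis partials_cont : forall i, {for x, continuous ('D_'e_i f)}.

Let J : 'M[R]_(n, k) := \matrix_(i, j) 'D_'e_i f x 0 j.

Lemma coord_increment_le {d eta h} (i : 'I_n) j :
  (forall z, ball x d z -> (forall l, derivable f z 'e_l) /\
     forall l, `|'D_'e_l f z - 'D_'e_l f x| <= eta) ->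
  `|h| < d ->
  `|f (x + coord_prefix h i.+1) 0 j - f (x + coord_prefix h i) 0 j
     - h 0 i * J i j| <= eta * `|h|.
Proof.
move=> near_x hd; pose z (s : R) := x + coord_prefix h i + s *: 'e_i.
have near_z s : `|s| <= `|h 0 i| ->
    derivable f (z s) 'e_i /\ `|'D_'e_i f (z s) - 'D_'e_i f x| <= eta.
  move=> si; have /near_x[dz bz] : ball x d (z s).
    rewrite -ball_normE /= /z -addrA opprD addNKr normrN.
    exact: le_lt_trans (norm_coord_prefix_le _ _ _ si) hd.
  by split; [exact: dz | exact: bz].
have z_der (s : R) : `|s| <= `|h 0 i| ->
    is_derive s 1 (fun s => f (z s) 0 j) ('D_'e_i f (z s) 0 j).
  move=> /near_z[dfz _]; have [dz Dz] := is_derive_along_line dfz.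
  by have := derive_entry 0 j dz; rewrite Dz.
have := @mean_value_le0 _ (fun s => f (z s) 0 j) (h 0 i) (J i j) eta.
rewrite /z scale0r addr0 coord_prefixS addrA => /(_ _ _)/le_trans; apply.
- by move=> s /z_der[].
- move=> s si; have [_ ->] := z_der s si; apply: le_trans (near_z s si).2.
  have := ler_entry_mx_norm ('D_'e_i f (z s) - 'D_'e_i f x) 0 j.
  by rewrite !mxE.
- have eta_ge0 : 0 <= eta.
    by apply: le_trans (near_z 0 _).2 => //; rewrite normr0.
  by rewrite ler_wpM2l // ler_entry_mx_norm.
Qed.

Lemma partials_remainder_le {eps : R} : 0 < eps ->
  \forall h \near (0 : 'rV[R]_n), `|f (h + x) - f x - h *m J| <= eps * `|h|.
Proof.
move=> eps_gt0; pose eta := eps / (n%:R + 1).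
have n1_gt0 : 0 < n%:R + 1 :> R by rewrite ltr_wpDl.
have eta_gt0 : 0 < eta by rewrite divr_gt0.
have : \forall z \near x, (forall l, derivable f z 'e_l) /\
    forall l, `|'D_'e_l f z - 'D_'e_l f x| <= eta.
  near=> z; split; first by near: z.
  near: z; apply: filter_forall => l.
  have /(@cvgrPdist_le _ _ _ (nbhs x)) /(_ eta eta_gt0) := partials_cont l.
  by apply: filterS => z; rewrite distrC.
move=> /nbhs_ballP[d d_gt0 near_x]; apply/nbhs_ballP; exists d => // h.
rewrite -ball_normE /= sub0r normrN => hd.
apply: mx_norm_le => [|l j]; first by rewrite mulr_ge0 // ltW.
rewrite (ord1 l) [h + x]addrC telescope_coord_prefix.
rewrite (le_trans (ler_norm_sum _ _ _)) //.
rewrite (le_trans (ler_sum _ (fun i _ => coord_increment_le i j near_x hd))) //.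
rewrite sumr_const card_ord -mulr_natl mulrA ler_wpM2r // /eta mulrA.
by rewrite ler_pdivrMr // mulrC ler_pM2l // lerDl.
Unshelve. all: by end_near. Qed.

Lemma differentiable_partials : differentiable f x.
Proof.
pose L : {linear 'rV[R]_n -> 'rV[R]_k} := mulmxr J.
have L_cont : continuous L := continuous_mulmxr J.
have f_expand : f \o shift x = cst (f x) + L +o_ (0 : 'rV[R]_n) id.
  apply/eqaddoP => eps eps_gt0.
  apply: filterS (partials_remainder_le eps_gt0) => h.
  by rewrite /= opprD addrA.
have dfE : 'd f x = L :> ('rV_n -> 'rV_k) by apply: diff_unique.
by apply/diff_locallyP; rewrite dfE.
Qed.

End continuous_partials.

Lemma smooth_on_differentiable {R : realType} {n k : nat} {A : set 'rV[R]_n}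
    {f : 'rV[R]_n -> 'rV[R]_k} {x} :
  open A -> smooth_on A f -> A x -> differentiable f x.
Proof.
move=> oA /(_ 1%N) [_ Df] Ax; apply: differentiable_partials => [|i].
  by apply: filterS (open_nbhs_nbhs (conj oA Ax)) => y Ay i; exact: (Df _).1.
exact: (Df _).2.
Qed.

Definition line_dir_factor {R : realType} {m : nat} (w : 'rV[R]_m) : R :=
  (Num.sqrt (1 + eucl2 w))^-1.

Section line_dir_derivative.
Context {R : realType} {m : nat}.
Implicit Types (w : 'rV[R]_m) (g : R -> 'rV[R]_m).

Lemma eucl2_ge0 w : 0 <= eucl2 w.
Proof. by apply: sumr_ge0 => j _; exact: sqr_ge0. Qed.

Lemma line_dir_factor_gt0 w : 0 < line_dir_factor w.
Proof. by rewrite invr_gt0 sqrtr_gt0 ltr_wpDr // eucl2_ge0. Qed.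

Lemma is_derive_eucl2 {g} {s : R} {g' : 'rV[R]_m} : is_derive s 1 g g' ->
  is_derive s 1 (fun r => eucl2 (g r)) ((\sum_j g s 0 j * g' 0 j) *+ 2).
Proof.
move=> [dg Dg].
have -> : (fun r => eucl2 (g r)) = \sum_j (fun r => g r 0 j) ^+ 2.
  by apply/funext => r; rewrite fct_sumE.
rewrite -sumrMnl; apply: is_derive_sum => j.
apply: is_derive_eq (is_deriveX 2 (derive_entry 0 j dg)) _.
by rewrite Dg expr1 -[RHS]mulr_natl mulrA.
Qed.

Lemma is_derive_line_dir_factor {g} {s : R} {g' : 'rV[R]_m} :
  is_derive s 1 g g' ->
  is_derive s 1 (fun r => line_dir_factor (g r))
    (- line_dir_factor (g s) ^+ 3 * \sum_j g s 0 j * g' 0 j).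
Proof.
move=> dg; set S := \sum_j _; pose G (r : R) := 1 + eucl2 (g r).
have G_gt0 r : 0 < G r by rewrite ltr_wpDr ?eucl2_ge0.
have [dG DG] : is_derive s 1 G (S *+ 2).
  have := is_deriveD (is_derive_cst (1 : R) s 1) (is_derive_eucl2 dg).
  by rewrite add0r.
have [dsqrt Dsqrt] := is_derive1_sqrt (G_gt0 s).
have dsqrtG : derivable (Num.sqrt \o G) s 1.
  apply/derivable1_diffP/differentiable_comp; exact/derivable1_diffP.
have DsqrtG : 'D_1 (Num.sqrt \o G) s = (2 * Num.sqrt (G s))^-1 * S *+ 2.
  rewrite -derive1E derive1_comp; [|exact: dG|exact: dsqrt].
  by rewrite !derive1E Dsqrt DG mulrnAr.
have sqrtG_neq0 : Num.sqrt (G s) != 0 by rewrite gt_eqF ?sqrtr_gt0.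
apply: DeriveDef; first exact: derivableV.
rewrite deriveV // DsqrtG /line_dir_factor -/(G s).
have scaleE (a b : R) : a *: b = a * b by [].
set q := Num.sqrt (G s); rewrite scaleE -mulr_natr.
by field.
Qed.

Lemma is_derive_line_dir (B : 'rV[R]_m -> 'rV[R]_m) (y v : 'rV[R]_m) :
  differentiable B y ->
  is_derive (0 : R) 1 (fun r => line_dir B (y + r *: v))
    ((- line_dir_factor (B y) ^+ 3 * \sum_j B y 0 j * 'd B y v 0 j)
       *: row_mx 1%:M (B y) + line_dir_factor (B y) *: row_mx 0 ('d B y v)).
Proof.
move=> /(is_derive_along_line0 v) dB.
have := is_derive_scale (is_derive_line_dir_factor dB)
  (is_derive_row_mx 1%:M dB).
by rewrite scale0r addr0.
Qed.

Lemma derive_line_dir_eq0 (B : 'rV[R]_m -> 'rV[R]_m) (y v : 'rV[R]_m) :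
  differentiable B y ->
  'D_1 (fun r : R => line_dir B (y + r *: v)) 0 = 0 <-> 'd B y v = 0.
Proof.
move=> /(is_derive_line_dir _ _ v) [_ ->]; set N := line_dir_factor (B y).
set dN := - N ^+ 3 * _.
split=> [D0|dBv]; last first.
  rewrite /dN dBv big1 => [|j _]; last by rewrite mxE mulr0.
  by rewrite mulr0 scale0r row_mx0 scaler0 addr0.
have dN0 : dN = 0.
  have := congr1 (fun M : 'rV_(1 + m) => M 0 (lshift m 0)) D0.
  rewrite /= mxE [X in X + _]mxE [X in _ + X]mxE !row_mxEl !mxE /=.
  by rewrite mulr1 mulr0 addr0.
have N_neq0 : N != 0 by rewrite gt_eqF ?line_dir_factor_gt0.
move: D0; rewrite dN0 scale0r add0r => /eqP.
rewrite scaler_eq0 (negbTE N_neq0) /=.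
by rewrite -row_mx0 => /eqP /eq_row_mx [].
Qed.

End line_dir_derivative.

Section line_fibration.
Context {R : realType} {m : nat} {B : 'rV[R]_m -> 'rV[R]_m}.

Lemma is_derive_line_pt (y v : 'rV[R]_m) (t : R) : differentiable B y ->
  is_derive (0 : R) 1 (fun r => line_pt B (y + r *: v) t)
    (row_mx 0 (v + t *: 'd B y v)).
Proof.
move=> /(is_derive_along_line0 v) dB.
have dy : is_derive (0 : R) 1 (fun r => id (y + r *: v)) v.
  have := @is_derive_along_line _ _ _ id y v 0; rewrite derive_id; apply.
  exact: derivable_id.
exact: is_derive_row_mx (is_deriveD dy (is_deriveZ t dB)).
Qed.

Lemma row_mx0_parallel_line_dir (y v : 'rV[R]_m) (c : R) :
  row_mx 0 v = c *: line_dir B y -> v = 0.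
Proof.
rewrite /line_dir !scale_row_mx => /eq_row_mx [c0 ->].
have := congr1 (fun M : 'rV_1 => M 0 0) c0.
rewrite /= !mxE mulr1 => /esym /eqP.
rewrite mulf_eq0 (gt_eqF (line_dir_factor_gt0 (B y))) orbF => /eqP ->.
by rewrite scale0r.
Qed.

Context {E : set 'rV[R]_m} {V : 'rV[R]_(1 + m) -> 'rV[R]_(1 + m)}.
Hypothesis V_line : forall y t, E y -> V (line_pt B y t) = line_dir B y.
Hypothesis V_diff : forall p, line_union E B p -> differentiable V p.

Lemma is_derive_line_dir_transversal (y v : 'rV[R]_m) (t : R) :
  open E -> E y -> differentiable B y ->
  is_derive (0 : R) 1 (fun r => line_dir B (y + r *: v))
    ('D_(row_mx 0 (v + t *: 'd B y v)) V (line_pt B y t)).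
Proof.
move=> oE Ey dB; have [dc Dc] := is_derive_line_pt y v t dB.
have E_near : \forall r \near (0 : R), E (y + r *: v).
  have : {for 0, continuous (fun r : R => y + r *: v)}.
    by apply: continuousD; [exact: cst_continuous | exact: scalel_continuous].
  by apply; rewrite scale0r addr0; exact: open_nbhs_nbhs.
have Tc0 : line_union E B (line_pt B (y + 0 *: v) t).
  by rewrite scale0r addr0; exists y, t.
have := is_derive1_comp dc (V_diff _ Tc0); rewrite Dc scale0r addr0.
by apply: near_eq_is_derive; near=> r; rewrite /= V_line //; near: r.
Unshelve. all: by end_near. Qed.

End line_fibration.

Theorem corollary3p9 (R : realType) (m : nat) (E : set 'rV[R]_m)
  (B : 'rV[R]_m -> 'rV[R]_m) :
  open E -> smooth_on E B -> smooth_nondeg_line_fibration E B ->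
  forall y, E y ->
    ~ (exists (lam : R) (v : 'rV[R]_m), v != 0 /\ 'd B y v = lam *: v).
Proof.
move=> oE sB [oT [_ [V [sV [_ [V_line nondeg]]]]]] y Ey.
move=> [lam [v [v_neq0 dBv]]].
have dB : differentiable B y := smooth_on_differentiable oE sB Ey.
have dV p : line_union E B p -> differentiable V p.
  exact: smooth_on_differentiable oT sV.
have Dh (t : R) : 'D_1 (fun r : R => line_dir B (y + r *: v)) 0 =
    'D_(row_mx 0 (v + t *: 'd B y v)) V (line_pt B y t).
  by have [] := is_derive_line_dir_transversal V_line dV y v t oE Ey dB.
have h'_eq0 := derive_line_dir_eq0 _ _ v dB.
move/eqP: v_neq0; apply.
have [lam0|lam_neq0] := eqVneq lam 0.
- have dBv0 : 'd B y v = 0 by rewrite dBv lam0 scale0r.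
  have := h'_eq0.2 dBv0; rewrite (Dh 0) scale0r addr0 => /nondeg[|c].
    by exists y, 0.
  by rewrite V_line //; exact: row_mx0_parallel_line_dir.
- have := h'_eq0.1; rewrite (Dh (- lam^-1)) dBv scalerA mulNr mulVf //.
  rewrite scaleN1r subrr row_mx0 derive0 => /(_ erefl) /eqP.
  by rewrite scaler_eq0 (negbTE lam_neq0) => /eqP.
Qed.
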